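(* Let $\nu>0$, let $K$ be a smooth positive function with antiderivative $J(u)=\int K(u)\,du$ assumed invertible, and let $A\neq 0$, $B$, $D\neq 0$, $Q$ be constants. Suppose $C(u)=D\,K(u)\left(AJ(u)+B\right)^{1/A}$. Then, on any region of $z>0$, $t>0$ where $Q+\frac{2(2A+1-\nu)}{D}t>0$ and the argument below lies in the range of $J$, $$u(z,t)=J^{-1}\!\left(\frac{1}{A}z^{-2A}\left(Q+\frac{2(2A+1-\nu)}{D}t\right)^{A}-\frac{B}{A}\right)$$ is a solution of $C(u)u_t=z^{-\nu}\left(K(u)z^{\nu}u_z\right)_z$. *)

From Stdlib Require Import Reals.
From Coquelicot Require Import Coquelicot.
Open Scope R_scope.

Definition Ccoef (K J : R -> R) (A B D : R) (w : R) : R :=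
  D * K w * Rpower (A * J w + B) (1 / A).

Definition sol_arg (nu A B D Q z t : R) : R :=
  1 / A * Rpower z (-2 * A) * Rpower (Q + 2 * (2 * A + 1 - nu) / D * t) A - B / A.

Definition sol_u (Jinv : R -> R) (nu A B D Q z t : R) : R :=
  Jinv (sol_arg nu A B D Q z t).

(* Since J' = K > 0, the function J is a strictly increasing bijection onto its
   (open) range, where the left inverse Jinv is differentiable with
   Jinv' = 1 / K(Jinv).  Hence J(u) = S for the explicit function
   S = (1/A) z^(-2A) P(t)^A - B/A, P(t) = Q + c t, c = 2(2A+1-nu)/D, and the
   chain rule gives K(u) u_t = S_t and K(u) z^nu u_z = z^nu S_z, in which K
   cancels.  As A S + B = z^(-2A) P^A, the coefficient C(u) becomes
   D K(u) z^(-2) P, and both sides of the equation reduce to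
   2(2A+1-nu) z^(-2A-2) P^A. *)
From Stdlib Require Import Reals Lra.
From Coquelicot Require Import Coquelicot.
Open Scope R_scope.

Lemma Rpower_plus_eq (x a b c : R) : a + b = c -> Rpower x a * Rpower x b = Rpower x c.
Proof. intros <-; symmetry; apply Rpower_plus. Qed.

Lemma is_derive_Rpower (e x : R) :
  0 < x -> is_derive (fun y => Rpower y e) x (e * Rpower x (e - 1)).
Proof. now intros Hx; apply is_derive_Reals, derivable_pt_lim_power. Qed.

Lemma ex_derive_Rpower (e x : R) : 0 < x -> ex_derive (fun y => Rpower y e) x.
Proof. now intros Hx; eexists; apply is_derive_Rpower. Qed.

Lemma Derive_Rpower (e x : R) :
  0 < x -> Derive (fun y => Rpower y e) x = e * Rpower x (e - 1).
Proof. now intros Hx; apply is_derive_unique, is_derive_Rpower. Qed.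

Definition in_open_range (J : R -> R) (y : R) : Prop := exists a b, J a < y < J b.

Lemma locally_in_open_range (J f : R -> R) (x : R) :
  continuous f x -> in_open_range J (f x) ->
  locally x (fun y => in_open_range J (f y)).
Proof.
  intros Hf [a [b Hab]].
  assert (Hnear : locally (f x) (fun v => J a < v < J b)).
  { apply (locally_interval _ _ (J a) (J b)); try apply Hab.
    now intros v Ha Hb; split. }
  eapply filter_imp; [| exact (Hf _ Hnear)].
  intros y Hy; now exists a, b.
Qed.

Section LeftInverse.

Variables K J Jinv : R -> R.
Hypothesis Kpos : forall x, 0 < K x.
Hypothesis HJ : forall x, is_derive J x (K x).
Hypothesis HJinv : forall x, Jinv (J x) = x.

Lemma J_increasing (x y : R) : x < y -> J x < J y.
Proof.
  intros Hxy.
  destruct (MVT_cor2 J K x y Hxy) as [c [Hc _]].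
  { intros c _; apply is_derive_Reals, HJ. }
  assert (0 < K c * (y - x)) by (apply Rmult_lt_0_compat; [apply Kpos | lra]).
  lra.
Qed.

Lemma J_lt_cancel (x y : R) : J x < J y -> x < y.
Proof.
  intros HJxy; destruct (Rlt_or_le x y) as [| [Hyx | ->]]; trivial.
  - pose proof (J_increasing _ _ Hyx); lra.
  - lra.
Qed.

Lemma J_continuity : continuity J.
Proof.
  intros x; apply continuity_pt_filterlim, (ex_derive_continuous (V := R_NormedModule)).
  now exists (K x).
Qed.

Lemma J_Jinv (a b y : R) : J a <= y <= J b -> J (Jinv y) = y.
Proof.
  intros Hy.
  destruct (IVT_gen J a b y J_continuity) as [x [_ <-]].
  - pose proof (Rmin_l (J a) (J b)); pose proof (Rmax_r (J a) (J b)); lra.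
  - now rewrite HJinv.
Qed.

Lemma in_open_range_J (w : R) : in_open_range J (J w).
Proof. exists (w - 1), (w + 1); split; apply J_increasing; lra. Qed.

Lemma J_Jinv_open (y : R) : in_open_range J y -> J (Jinv y) = y.
Proof. intros [a [b Hy]]; apply (J_Jinv a b); lra. Qed.

Lemma is_derive_Jinv (y : R) : in_open_range J y -> is_derive Jinv y (/ K (Jinv y)).
Proof.
  intros [a [b Hy]].
  assert (Hab : a < b) by (apply J_lt_cancel; lra).
  assert (Hcont : continuity_pt Jinv y).
  { apply (Ranalysis5.continuity_pt_recip_prelim J Jinv a b Hab); trivial.
    - intros x x' _ Hxx' _; now apply J_increasing.
    - intros x _; apply HJinv.
    - intros x _; apply J_continuity. }
  assert (Hmid : Jinv (J a) <= Jinv y <= Jinv (J b)).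
  { rewrite !HJinv; split; apply Rlt_le, J_lt_cancel; rewrite (J_Jinv a b); lra. }
  pose proof (Ranalysis5.derivable_pt_lim_recip_interv J Jinv (J a) (J b) y
    (fun x _ => ex_derive_Reals_0 J x (ex_intro _ (K x) (HJ x)))
    Hcont (J_increasing _ _ Hab) Hy Hmid (fun x Hx => J_Jinv a b x Hx)) as HD.
  rewrite Derive_Reals, (is_derive_unique _ _ _ (HJ _)) in HD.
  apply is_derive_Reals; rewrite <- Rdiv_1_l.
  apply HD, Rgt_not_eq, Kpos.
Qed.

Lemma is_derive_Jinv_comp (f : R -> R) (x l : R) :
  in_open_range J (f x) -> is_derive f x l ->
  is_derive (fun y => Jinv (f y)) x (l * / K (Jinv (f x))).
Proof. intros Hf Hl; apply (is_derive_comp Jinv f); [now apply is_derive_Jinv | exact Hl]. Qed.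

End LeftInverse.

Section ExplicitSolution.

Variables nu A B D Q : R.
Hypothesis HA : A <> 0.

Local Notation c := (2 * (2 * A + 1 - nu) / D).
Local Notation P t := (Q + c * t).

Lemma is_derive_sol_arg_z (z t : R) :
  0 < z ->
  is_derive (fun y => sol_arg nu A B D Q y t) z (-2 * Rpower z (-2 * A - 1) * Rpower (P t) A).
Proof.
  intros Hz; unfold sol_arg; auto_derive.
  - now apply ex_derive_Rpower.
  - rewrite Derive_Rpower by exact Hz; field; exact HA.
Qed.

Lemma is_derive_sol_arg_t (z t : R) :
  0 < P t ->
  is_derive (fun s => sol_arg nu A B D Q z s) t (Rpower z (-2 * A) * Rpower (P t) (A - 1) * c).
Proof.
  intros HP; unfold sol_arg; auto_derive.
  - now apply ex_derive_Rpower.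
  - rewrite Derive_Rpower by exact HP.
    (* with c folded, field does not ask for D <> 0 *)
    set (k := c); field; exact HA.
Qed.

Lemma is_derive_radial_flux (z t : R) :
  0 < z ->
  is_derive (fun y => Rpower y nu * (-2 * Rpower y (-2 * A - 1) * Rpower (P t) A)) z
    (2 * (2 * A + 1 - nu) * Rpower z (nu - 2 * A - 2) * Rpower (P t) A).
Proof.
  intros Hz; auto_derive.
  - repeat split; now apply ex_derive_Rpower.
  - rewrite !Derive_Rpower by exact Hz.
    transitivity (-2 * nu * Rpower (P t) A * (Rpower z (nu - 1) * Rpower z (-2 * A - 1))
      + 2 * (2 * A + 1) * Rpower (P t) A * (Rpower z nu * Rpower z (-2 * A - 1 - 1)));
      [ring |].
    rewrite (Rpower_plus_eq z (nu - 1) _ (nu - 2 * A - 2)) by ring.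
    rewrite (Rpower_plus_eq z nu _ (nu - 2 * A - 2)) by ring.
    ring.
Qed.

Lemma Rpower_affine_sol_arg (z t : R) :
  0 < z -> 0 < P t ->
  Rpower (A * sol_arg nu A B D Q z t + B) (1 / A) = Rpower z (-2) * P t.
Proof.
  intros Hz HP.
  replace (A * sol_arg nu A B D Q z t + B) with (Rpower z (-2 * A) * Rpower (P t) A)
    by (unfold sol_arg; field; exact HA).
  rewrite <- Rpower_mult_distr by (unfold Rpower; apply exp_pos).
  rewrite !Rpower_mult.
  replace (-2 * A * (1 / A)) with (-2) by (field; exact HA).
  replace (A * (1 / A)) with 1 by (field; exact HA).
  now rewrite Rpower_1.
Qed.

Lemma sol_arg_balance (z t : R) :
  D <> 0 -> 0 < z -> 0 < P t ->
  D * Rpower (A * sol_arg nu A B D Q z t + B) (1 / A)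
    * (Rpower z (-2 * A) * Rpower (P t) (A - 1) * c)
  = Rpower z (- nu) * (2 * (2 * A + 1 - nu) * Rpower z (nu - 2 * A - 2) * Rpower (P t) A).
Proof.
  intros HD Hz HP.
  rewrite Rpower_affine_sol_arg by assumption.
  transitivity (D * c * (Rpower z (-2) * Rpower z (-2 * A))
                 * (Rpower (P t) 1 * Rpower (P t) (A - 1)));
    [rewrite Rpower_1 by exact HP; ring |].
  transitivity (2 * (2 * A + 1 - nu) * (Rpower z (- nu) * Rpower z (nu - 2 * A - 2))
                 * Rpower (P t) A); [| ring].
  rewrite (Rpower_plus_eq z (-2) _ (-2 * A - 2)), (Rpower_plus_eq (P t) 1 _ A),
    (Rpower_plus_eq z (- nu) _ (-2 * A - 2)) by ring.
  field; exact HD.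
Qed.

End ExplicitSolution.

Theorem mainTheorem7
  (nu : R) (K J Jinv : R -> R) (A B D Q : R)
  (Hnu : 0 < nu)
  (Ksmooth : forall (n : nat) (x : R), ex_derive_n K n x)
  (Kpos : forall x : R, 0 < K x)
  (HJ : forall x : R, is_derive J x (K x))
  (HJinv : forall x : R, Jinv (J x) = x)
  (HA : A <> 0) (HD : D <> 0)
  (z t : R) (Hz : 0 < z) (Ht : 0 < t)
  (HQ : 0 < Q + 2 * (2 * A + 1 - nu) / D * t)
  (Hrange : exists w : R, J w = sol_arg nu A B D Q z t) :
  let u := sol_u Jinv nu A B D Q in
  locally z (fun y => ex_derive (fun y' => u y' t) y) /\
  exists ut flux_z : R,
    is_derive (fun s => u z s) t ut /\
    is_derive (fun y => K (u y t) * Rpower y nu * Derive (fun y' => u y' t) y)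
      z flux_z /\
    Ccoef K J A B D (u z t) * ut = Rpower z (- nu) * flux_z.
Proof.
  intros u; unfold u, sol_u.
  assert (HS : in_open_range J (sol_arg nu A B D Q z t))
    by (destruct Hrange as [w <-]; apply (in_open_range_J K J Kpos HJ)).
  assert (Hnear : locally z (fun y => 0 < y /\ in_open_range J (sol_arg nu A B D Q y t))).
  { apply filter_and; [now apply open_gt | apply locally_in_open_range; trivial].
    apply (ex_derive_continuous (V := R_NormedModule)); eexists; now apply is_derive_sol_arg_z. }
  assert (Hu_z : forall y, 0 < y /\ in_open_range J (sol_arg nu A B D Q y t) ->
    is_derive (fun y' => Jinv (sol_arg nu A B D Q y' t)) y
      (-2 * Rpower y (-2 * A - 1) * Rpower (Q + 2 * (2 * A + 1 - nu) / D * t) A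
        * / K (Jinv (sol_arg nu A B D Q y t)))).
  { intros y [Hy HSy].
    apply (is_derive_Jinv_comp K J Jinv Kpos HJ HJinv (fun y' => sol_arg nu A B D Q y' t));
      [exact HSy | now apply is_derive_sol_arg_z]. }
  split; [eapply filter_imp; [intros y Hy; eexists; exact (Hu_z y Hy) | exact Hnear] |].
  do 2 eexists; split; [|split].
  - apply (is_derive_Jinv_comp K J Jinv Kpos HJ HJinv (fun s => sol_arg nu A B D Q z s));
      [exact HS | now apply is_derive_sol_arg_t].
  - eapply is_derive_ext_loc; [| exact (is_derive_radial_flux nu A D Q z t Hz)].
    eapply filter_imp; [intros y Hy | exact Hnear].
    rewrite (is_derive_unique (fun y' : R => Jinv (sol_arg nu A B D Q y' t)) _ _ (Hu_z y Hy)).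
    simpl; field; apply Rgt_not_eq, Kpos.
  - unfold Ccoef; rewrite (J_Jinv_open K J Jinv HJ HJinv _ HS).
    rewrite <- (sol_arg_balance nu A B D Q HA z t HD Hz HQ).
    change (scal ?a ?b) with (a * b).
    field; split; [exact HD | apply Rgt_not_eq, Kpos].
Qed.
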